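(* Let $(\mathcal A,\mathcal T,(-))$ be a meta-tangible $\mathcal T$-group module triple. Then every nonzero element $c\in\mathcal A$, of height $m_c$, is uniform, i.e. there is $c_{\mathcal T}\in\mathcal T$ such that one of the following holds: (1) $m_c=1$ and $c=c_{\mathcal T}\in\mathcal T$; (2) $m_c=2$ and $c=c_{\mathcal T}^\circ$; (3) $m_c\ge3$, $c=m_cc_{\mathcal T}$ (the $m_c$-fold sum of $c_{\mathcal T}$), and the triple is exceptional, i.e. $(-)$ is of the first kind and $\mathcal A$ has height greater than $2$, and moreover $\mathbf 3\neq\mathbb 1$.
   Context: $(\mathcal A,+,\mathbb 0)$ commutative monoid, $\mathcal T\subseteq\mathcal A\setminus\{\mathbb 0\}$. A negation map is $(-):\mathcal A\to\mathcal A$ with $(-)(b_1+b_2)=(-)b_1+(-)b_2$, $(-)((-)b)=b$, $(-)\mathbb 0=\mathbb 0$, $(-)\mathcal T\subseteq\mathcal T$. Write $b(-)c:=b+((-)c)$, $b^\circ:=b(-)b$, $\mathcal A^\circ=\{b^\circ:b\in\mathcal A\}$. A $\mathcal T$-triple $(\mathcal A,\mathcal T,(-))$: such data with an action $\mathcal T\times\mathcal A\to\mathcal A$ satisfying $a(b_1+b_2)=ab_1+ab_2$, $a\mathbb 0=\mathbb 0$, $(-)(ab)=((-)a)b=a((-)b)$, with $\mathcal T\cap\mathcal A^\circ=\emptyset$ and every element of $\mathcal A$ a finite sum of elements of $\mathcal T$. It is a $\mathcal T$-group module triple if moreover $\mathcal T$ is a group with identity $\mathbb 1$ whose multiplication is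 the restriction of the action, $\mathbb 1b=b$ and $(a_1a_2)b=a_1(a_2b)$. Meta-tangible: $a+b\in\mathcal T$ for all $a,b\in\mathcal T$ with $b\neq(-)a$. $(-)$ is of the first kind if $(-)a=a$ for all $a\in\mathcal T$. $\mathbf 3=\mathbb 1+\mathbb 1+\mathbb 1$. Height of $c$: least $t$ with $c=\sum_{i=1}^ta_i$, $a_i\in\mathcal T$; height of $\mathcal A$: supremum over its elements. *)

From Stdlib Require Import List Arith.
Import ListNotations.
Set Implicit Arguments.

(** The carrier A is [car], T is the predicate [tang], the action
    T x A -> A is [act] (only meaningful for first argument in T),
    and the group multiplication on T is the restriction of [act]. *)
Record TGroupModuleTriple := {
  car : Type;
  add : car -> car -> car;
  zero : car;
  tang : car -> Prop;
  neg : car -> car;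
  act : car -> car -> car;
  one : car;
  add_assoc : forall x y z, add x (add y z) = add (add x y) z;
  add_comm : forall x y, add x y = add y x;
  add_0l : forall x, add zero x = x;
  tang_nz : forall a, tang a -> a <> zero;
  neg_add : forall b1 b2, neg (add b1 b2) = add (neg b1) (neg b2);
  neg_invol : forall b, neg (neg b) = b;
  neg_zero : neg zero = zero;
  neg_tang : forall a, tang a -> tang (neg a);
  act_add : forall a b1 b2, tang a -> act a (add b1 b2) = add (act a b1) (act a b2);
  act_zero : forall a, tang a -> act a zero = zero;
  act_negl : forall a b, tang a -> neg (act a b) = act (neg a) b;
  act_negr : forall a b, tang a -> neg (act a b) = act a (neg b);
  tang_not_circ : forall a b, tang a -> a <> add b (neg b);
  tang_generates : forall c : car,
      exists l : list car, Forall tang l /\ c = fold_right add zero l;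
  one_tang : tang one;
  tang_mul : forall a1 a2, tang a1 -> tang a2 -> tang (act a1 a2);
  mul_one_r : forall a, tang a -> act a one = a;
  tang_inv : forall a, tang a ->
      exists a', tang a' /\ act a' a = one /\ act a a' = one;
  one_act : forall b, act one b = b;
  act_assoc : forall a1 a2 b, tang a1 -> tang a2 ->
      act (act a1 a2) b = act a1 (act a2 b)
}.

Section Defs.
Variable X : TGroupModuleTriple.

Definition circ (b : car X) : car X := add X b (neg X b).

Definition meta_tangible : Prop :=
  forall a b, tang X a -> tang X b -> b <> neg X a -> tang X (add X a b).

Definition first_kind : Prop := forall a, tang X a -> neg X a = a.

Fixpoint nsum (n : nat) (x : car X) : car X :=
  match n with 0 => zero X | S k => add X x (nsum k x) end.

Definition sum_of_tang (c : car X) (t : nat) : Prop :=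
  exists l : list (car X), length l = t /\ Forall (tang X) l /\
                           c = fold_right (add X) (zero X) l.

Definition height (c : car X) (m : nat) : Prop :=
  sum_of_tang c m /\ forall t, sum_of_tang c t -> m <= t.

Definition height_gt2 : Prop := exists c m, height c m /\ 2 < m.

Definition three : car X := add X (one X) (add X (one X) (one X)).

End Defs.

(* Take a decomposition c = a_1 + ... + a_m into tangible elements of minimal length m.
   If two summands a_i, a_j were not negatives of each other, meta-tangibility would make
   a_i + a_j tangible and give a shorter decomposition; so a_j = (-)a_i for all i <> j.
   For m = 2 this says c = a_1°. For m >= 3 it forces (-)a_1 = a_2 = (-)a_3 = a_1, so all
   summands equal a_1, and (-) fixes a_1, hence every tangible a = (a a_1^{-1}) a_1.
   Finally 3 = 1 would give a_1 + a_1 + a_1 = a_1, again shortening the decomposition. *)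

From Stdlib Require Import List Arith Lia Permutation Classical.

Section Decompositions.
Context {X : TGroupModuleTriple}.

Local Notation sum := (fold_right (add X) (zero X)).

Lemma add_0r (x : car X) : add X x (zero X) = x.
Proof. rewrite add_comm; apply add_0l. Qed.

Lemma sum_perm {l l' : list (car X)} : Permutation l l' -> sum l = sum l'.
Proof.
  induction 1 as [| x l l' _ IH | x y l | l l' l'' _ IH1 _ IH2]; simpl.
  - reflexivity.
  - now rewrite IH.
  - now rewrite !add_assoc, (add_comm X y x).
  - now rewrite IH1.
Qed.

Lemma sum_repeat (a : car X) (n : nat) : sum (repeat a n) = nsum X n a.
Proof. induction n; simpl; congruence. Qed.

Lemma nsum_add (m n : nat) (a : car X) :
  nsum X (m + n) a = add X (nsum X m a) (nsum X n a).
Proof.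
  induction m as [|m IH]; simpl.
  - now rewrite add_0l.
  - now rewrite IH, add_assoc.
Qed.

Lemma sum_of_tang_nsum (a : car X) (n : nat) :
  tang X a -> sum_of_tang X (nsum X n a) n.
Proof.
  intros ta; exists (repeat a n).
  split; [apply repeat_length|]; split.
  - apply Forall_forall; intros z Hz; now rewrite (repeat_spec _ _ _ Hz).
  - now rewrite sum_repeat.
Qed.

Lemma act_three (a : car X) : tang X a -> act X a (three X) = nsum X 3 a.
Proof.
  intros ta; unfold three; simpl.
  rewrite !act_add, !mul_one_r, add_0r by (auto using one_tang); reflexivity.
Qed.

Lemma first_kind_of_neg_fixed {a : car X} :
  tang X a -> neg X a = a -> first_kind X.
Proof.
  intros ta Ha b tb.
  destruct (tang_inv X a ta) as [a' [ta' [Ha'a _]]].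
  assert (tba' : tang X (act X b a')) by now apply tang_mul.
  assert (Eb : b = act X (act X b a') a)
    by now rewrite act_assoc, Ha'a, mul_one_r.
  now rewrite Eb, (act_negr X _ _ tba'), Ha.
Qed.

Lemma height_nsum_three_neq_one {c a : car X} {m : nat} :
  height X c m -> tang X a -> c = nsum X m a -> 3 <= m -> three X <> one X.
Proof.
  intros [_ Hmin] ta Hc Hm H31.
  assert (Ha3 : nsum X 3 a = a)
    by now rewrite <- act_three, H31, mul_one_r.
  assert (Hs : sum_of_tang X c (m - 2)).
  { replace c with (nsum X (m - 2) a); [now apply sum_of_tang_nsum|].
    destruct (Nat.le_exists_sub 3 m Hm) as [k [-> _]].
    replace (k + 3 - 2) with (k + 1) by lia.
    rewrite Hc, !nsum_add, Ha3; simpl; now rewrite add_0r. }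
  apply Hmin in Hs; lia.
Qed.

Hypothesis hmt : meta_tangible X.

Lemma height_summands_neg {c : car X} {m : nat} {l : list (car X)} {x y r} :
  height X c m -> Forall (tang X) l -> c = sum l -> length l = m ->
  Permutation l (x :: y :: r) -> y = neg X x.
Proof.
  intros [_ Hmin] Hl Hc Hlen Hp.
  apply NNPP; intro Hyx.
  apply (Permutation_Forall Hp) in Hl.
  inversion Hl as [| ? ? tx Hyr]; inversion Hyr as [| ? ? ty Hr]; subst.
  assert (Hs : sum_of_tang X (sum l) (S (length r))).
  { exists (add X x y :: r); split; [reflexivity|]; split.
    - constructor; [apply hmt|]; assumption.
    - rewrite (sum_perm Hp); simpl; apply add_assoc. }
  apply Hmin in Hs; apply Permutation_length in Hp; simpl in Hp; lia.
Qed.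

Lemma height_summand_neg {c : car X} {m : nat} {x r y} :
  height X c m -> Forall (tang X) (x :: r) -> c = sum (x :: r) ->
  length (x :: r) = m -> In y r -> y = neg X x.
Proof.
  intros Hh Hl Hc Hlen Hy.
  destruct (in_split y r) as [r1 [r2 ->]]; [assumption|].
  apply (height_summands_neg (r := r1 ++ r2) Hh Hl Hc Hlen).
  apply perm_skip, Permutation_sym, Permutation_middle.
Qed.

End Decompositions.

Theorem theorem7p28 (X : TGroupModuleTriple) (hmt : meta_tangible X) :
  forall (c : car X) (m : nat), c <> zero X -> height X c m ->
  exists cT : car X, tang X cT /\
    ( (m = 1 /\ c = cT)
    \/ (m = 2 /\ c = circ X cT)
    \/ (3 <= m /\ c = nsum X m cT /\
        first_kind X /\ height_gt2 X /\ three X <> one X) ).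
Proof.
  intros c m Hc0 Hh.
  pose proof Hh as [[l [Hlen [Hl Hc]]] _].
  destruct l as [|a1 r]; [contradiction|].
  exists a1; split; [exact (Forall_inv Hl)|].
  assert (Hneg : forall y, In y r -> y = neg X a1)
    by (intros y; exact (height_summand_neg hmt Hh Hl Hc Hlen)).
  destruct r as [|a2 [|a3 rest]]; simpl in Hlen.
  - left; split; [lia|]; now rewrite Hc; simpl; rewrite add_0r.
  - right; left; split; [lia|].
    now rewrite Hc, (Hneg a2 (or_introl eq_refl)); simpl; rewrite add_0r.
  - right; right.
    assert (H23 : a3 = neg X a2).
    { apply (height_summands_neg hmt (r := a1 :: rest) Hh Hl Hc Hlen).
      etransitivity; [apply perm_swap | apply perm_skip, perm_swap]. }
    assert (Hfix : neg X a1 = a1).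
    { rewrite <- (Hneg a3), H23, (Hneg a2), neg_invol; simpl; auto. }
    assert (Hcn : c = nsum X m a1).
    { rewrite Hc, <- Hlen, <- sum_repeat.
      change (S (S (S (length rest)))) with (length (a1 :: a2 :: a3 :: rest)).
      f_equal; apply Forall_eq_repeat, Forall_forall.
      intros y [<-|Hy]; [reflexivity|].
      now rewrite (Hneg y Hy), Hfix. }
    split; [lia|]; split; [exact Hcn|]; split; [|split].
    + exact (first_kind_of_neg_fixed (Forall_inv Hl) Hfix).
    + exists c, m; split; [exact Hh|lia].
    + apply (height_nsum_three_neq_one Hh (Forall_inv Hl) Hcn); lia.
Qed.
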